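(* Let $G=\{\cdot\mid *\}$ and let $\mathcal{U}=\mathcal{D}(G)$. Then $G\equiv_\mathcal{U}0$.
   Context: Games are finite partizan games; $\{\cdot\mid *\}$ is the game with no Left option and sole Right option $*=\{0\mid0\}$. $o(G)$ is the misère outcome class (ordered $\mathscr{L}>\mathscr{N}>\mathscr{R}$, $\mathscr{L}>\mathscr{P}>\mathscr{R}$). A universe is a set of games closed under options, disjunctive sums, conjugates, and forming $\{\mathscr{G}^L\mid\mathscr{G}^R\}$ from nonempty finite subsets of it; $\mathcal{D}(\mathcal{A})$ is the smallest universe containing $\mathcal{A}$. $G\equiv_\mathcal{U}H$ means $o(G+X)=o(H+X)$ for all $X\in\mathcal{U}$. *)

From Stdlib Require Import List.
Import ListNotations.

Inductive game : Type := Game : list game -> list game -> game.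

Definition lefts (G : game) : list game := match G with Game L _ => L end.
Definition rights (G : game) : list game := match G with Game _ R => R end.

Definition zero : game := Game [] [].
Definition star : game := Game [zero] [zero].

(** Misere play: a player with no move available wins.
    [wins_first G] = (Left wins moving first in G, Right wins moving first in G). *)
Fixpoint wins_first (G : game) : bool * bool :=
  match G with
  | Game L R =>
      (match L with [] => true | _ => existsb (fun g => negb (snd (wins_first g))) L end,
       match R with [] => true | _ => existsb (fun g => negb (fst (wins_first g))) R end)
  end.

Inductive outcome : Type := OL | ON | OP | OR.

Definition o (G : game) : outcome :=
  match wins_first G with
  | (true, false) => OL
  | (true, true) => ON
  | (false, false) => OP
  | (false, true) => OR
  end.

Fixpoint add (G : game) : game -> game :=
  fix addG (H : game) : game :=
    match G, H with
    | Game GL GR, Game HL HR =>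
        Game (map (fun g => add g H) GL ++ map addG HL)
             (map (fun g => add g H) GR ++ map addG HR)
    end.

Fixpoint conj (G : game) : game :=
  match G with Game L R => Game (map conj R) (map conj L) end.

Definition is_universe (U : game -> Prop) : Prop :=
  (forall G g, U G -> In g (lefts G) -> U g) /\
  (forall G g, U G -> In g (rights G) -> U g) /\
  (forall G H, U G -> U H -> U (add G H)) /\
  (forall G, U G -> U (conj G)) /\
  (forall L R, L <> [] -> R <> [] ->
     (forall g, In g L -> U g) -> (forall g, In g R -> U g) -> U (Game L R)).

Definition Dclos (A : game -> Prop) (G : game) : Prop :=
  forall U, is_universe U -> (forall x, A x -> U x) -> U G.

Definition equiv_mod (U : game -> Prop) (G H : game) : Prop :=
  forall X, U X -> o (add G X) = o (add H X).

From Stdlib Require Import List Bool.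
Import ListNotations.

(* A Right end (a position without Right moves) is protected if every Left
   move from it can be answered by a Right move to a protected Right end; Left
   ends dually.  Games all of whose subpositions have only protected ends form
   a universe containing {. | *}, hence containing D({. | *}).
   In {. | *} + X the Left moves are those of X (shifted), and Right has one
   extra move, to * + X.  It never helps Right: if * + X is lost by Left moving
   first, so is Left's move to X, hence Right already wins moving first in X.
   It is never missed either: when Right has no move in X, X is a protected
   end and * + X is lost by Left moving first, since Left's move to X leaves
   Right without a move and any other Left move is answered by Right back to
   * + (protected end). *)

Section GameInduction.

Variable P : game -> Prop.

Hypothesis IH : forall L R,
  (forall g, In g L -> P g) -> (forall g, In g R -> P g) -> P (Game L R).

Fixpoint game_ind_In (G : game) : P G :=
  match G with
  | Game L R =>
      let fix all_In (l : list game) : forall g, In g l -> P g :=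
        match l with
        | [] => fun g (Hg : In g []) => match Hg with end
        | h :: t => fun g Hg =>
            match Hg with
            | or_introl e => eq_ind h P (game_ind_In h) g e
            | or_intror Ht => all_In t g Ht
            end
        end in
      IH L R (all_In L) (all_In R)
  end.

End GameInduction.

Lemma add_Game GL GR HL HR :
  add (Game GL GR) (Game HL HR) =
  Game (map (fun g => add g (Game HL HR)) GL ++ map (add (Game GL GR)) HL)
       (map (fun g => add g (Game HL HR)) GR ++ map (add (Game GL GR)) HR).
Proof. reflexivity. Qed.

Lemma In_sum_options (P : game -> Prop) G H GO HO :
  (forall g, In g GO -> P (add g H)) -> (forall h, In h HO -> P (add G h)) ->
  forall x, In x (map (fun g => add g H) GO ++ map (add G) HO) -> P x.
Proof.
  intros HG HH x Hx.
  apply in_app_or in Hx as [Hx | Hx]; apply in_map_iff in Hx as [y [<- Hy]]; auto.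
Qed.

Lemma add_zero_l X : add zero X = X.
Proof.
  induction X as [L R IHL IHR] using game_ind_In.
  unfold zero; rewrite add_Game; cbn.
  f_equal; [rewrite <- (map_id L) at 2 | rewrite <- (map_id R) at 2];
    apply map_ext_in; assumption.
Qed.

Lemma conj_involutive X : conj (conj X) = X.
Proof.
  induction X as [L R IHL IHR] using game_ind_In.
  cbn; rewrite !map_map.
  f_equal; [rewrite <- (map_id L) at 2 | rewrite <- (map_id R) at 2];
    apply map_ext_in; assumption.
Qed.

Lemma conj_add X Y : conj (add X Y) = add (conj X) (conj Y).
Proof.
  revert Y; induction X as [XL XR IHXL IHXR] using game_ind_In; intro Y.
  induction Y as [YL YR IHYL IHYR] using game_ind_In.
  cbn [conj]; rewrite !add_Game; cbn [conj].
  rewrite !map_app, !map_map.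
  f_equal; f_equal; apply map_ext_in; auto.
Qed.

Inductive protected_right_end : game -> Prop :=
| ProtectedRightEnd L :
    (forall l, In l L -> has_protected_right_option l) ->
    protected_right_end (Game L [])
with has_protected_right_option : game -> Prop :=
| HasProtectedRightOption L R r :
    In r R -> protected_right_end r -> has_protected_right_option (Game L R).

Scheme protected_right_end_mutind := Induction for protected_right_end Sort Prop
with has_protected_right_option_mutind :=
  Induction for has_protected_right_option Sort Prop.

Lemma protected_right_end_zero : protected_right_end zero.
Proof. constructor; intros l []. Qed.

Lemma protected_right_end_add X Y :
  protected_right_end X -> protected_right_end Y -> protected_right_end (add X Y).
Proof.
  intro HX; revert Y.
  induction HX as [L _ IHL | lL lR r Hr _ IHr]
    using protected_right_end_mutind
    with (P0 := fun l _ => forall Y, protected_right_end Y ->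
                             has_protected_right_option (add l Y)).
  - intros Y HY.
    induction HY as [M HM IHM | mL mR r Hr _ IHr]
      using protected_right_end_mutind
      with (P0 := fun m _ => has_protected_right_option (add (Game L []) m)).
    + rewrite add_Game; constructor.
      apply In_sum_options; [| exact IHM].
      intros l Hl; apply IHL; [exact Hl | constructor; exact HM].
    + rewrite add_Game.
      apply HasProtectedRightOption with (add (Game L []) r); [|exact IHr].
      apply in_map; exact Hr.
  - intros [YL YR] HY; rewrite add_Game.
    apply HasProtectedRightOption with (add r (Game YL YR)); [|auto].
    apply in_or_app; left; apply in_map with (f := fun g => add g _); exact Hr.
Qed.

Inductive ends_protected : game -> Prop :=
| EndsProtected L R :
    (R = [] -> protected_right_end (Game L R)) ->
    (L = [] -> protected_right_end (conj (Game L R))) ->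
    (forall g, In g L -> ends_protected g) ->
    (forall g, In g R -> ends_protected g) ->
    ends_protected (Game L R).

Lemma ends_protected_add X Y :
  ends_protected X -> ends_protected Y -> ends_protected (add X Y).
Proof.
  intro HX; revert Y.
  induction HX as [XL XR HXR HXL _ IHL _ IHR]; intros Y HY.
  pose proof HY as HY0.
  induction HY as [YL YR HYR HYL HSYL IHYL HSYR IHYR].
  rewrite add_Game; constructor.
  - intros [E1 E2]%app_eq_nil.
    apply map_eq_nil in E1, E2.
    rewrite <- add_Game; apply protected_right_end_add; auto.
  - intros [E1 E2]%app_eq_nil.
    apply map_eq_nil in E1, E2.
    rewrite <- add_Game, conj_add; apply protected_right_end_add; auto.
  - apply In_sum_options; auto.
  - apply In_sum_options; auto.
Qed.

Lemma ends_protected_conj X : ends_protected X -> ends_protected (conj X).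
Proof.
  induction 1 as [L R HR HL _ IHL _ IHR]; cbn; constructor.
  - intros E%map_eq_nil; exact (HL E).
  - intros E%map_eq_nil; change (protected_right_end (conj (conj (Game L R)))).
    rewrite conj_involutive; exact (HR E).
  - intros g [x [<- Hx]]%in_map_iff; auto.
  - intros g [x [<- Hx]]%in_map_iff; auto.
Qed.

Lemma ends_protected_universe : is_universe ends_protected.
Proof.
  split; [|split; [|split; [|split]]].
  - intros G g [L R _ _ HL _]; exact (HL g).
  - intros G g [L R _ _ _ HR]; exact (HR g).
  - exact ends_protected_add.
  - exact ends_protected_conj.
  - intros L R HL HR; constructor; auto; intro; contradiction.
Qed.

Lemma ends_protected_zero : ends_protected zero.
Proof.
  constructor; try (intros; exact protected_right_end_zero); intros g [].
Qed.

Lemma ends_protected_star : ends_protected star.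
Proof. constructor; try discriminate; intros g [<- | []]; exact ends_protected_zero. Qed.

Lemma ends_protected_right_star : ends_protected (Game [] [star]).
Proof.
  constructor; try discriminate.
  - intros _; cbn; constructor; intros l [<- | []].
    apply HasProtectedRightOption with zero;
      [left; reflexivity | exact protected_right_end_zero].
  - intros g [].
  - intros g [<- | []]; exact ends_protected_star.
Qed.

Definition left_wins (X : game) : bool := fst (wins_first X).
Definition right_wins (X : game) : bool := snd (wins_first X).

Definition mover_wins (opp : game -> bool) (opts : list game) : bool :=
  match opts with [] => true | _ => existsb (fun g => negb (opp g)) opts end.

Lemma wins_first_Game L R :
  wins_first (Game L R) = (mover_wins right_wins L, mover_wins left_wins R).
Proof. reflexivity. Qed.

Lemma left_wins_Game L R : left_wins (Game L R) = mover_wins right_wins L.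
Proof. reflexivity. Qed.

Lemma right_wins_Game L R : right_wins (Game L R) = mover_wins left_wins R.
Proof. reflexivity. Qed.

Lemma mover_wins_map_ext (f g : game -> bool) (h : game -> game) l :
  (forall x, In x l -> f (h x) = g x) -> mover_wins f (map h l) = mover_wins g l.
Proof.
  intro Hfg.
  assert (Hex : existsb (fun y => negb (f y)) (map h l)
                = existsb (fun y => negb (g y)) l).
  { induction l as [|b s IHs]; cbn; [reflexivity|].
    rewrite Hfg, IHs; auto with datatypes. }
  destruct l; [reflexivity | exact Hex].
Qed.

Lemma mover_wins_cons f a l :
  l <> [] -> mover_wins f (a :: l) = negb (f a) || mover_wins f l.
Proof. destruct l; [contradiction | reflexivity]. Qed.

Lemma star_add X :
  add star X = Game (X :: map (add star) (lefts X)) (X :: map (add star) (rights X)).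
Proof.
  destruct X as [L R]; unfold star; rewrite add_Game; cbn [map app lefts rights].
  rewrite add_zero_l; reflexivity.
Qed.

Lemma right_wins_of_left_loses_star_add X :
  left_wins (add star X) = false -> right_wins X = true.
Proof.
  rewrite star_add, left_wins_Game; cbn [lefts mover_wins existsb].
  destruct (right_wins X); [reflexivity | discriminate].
Qed.

Lemma left_loses_star_add X :
  protected_right_end X -> left_wins (add star X) = false.
Proof.
  induction 1 as [L _ IHL | lL lR r Hr _ IHr]
    using protected_right_end_mutind
    with (P0 := fun l _ => right_wins (add star l) = true).
  - rewrite star_add, left_wins_Game; cbn [lefts mover_wins existsb].
    rewrite right_wins_Game; cbn [mover_wins negb orb].
    apply not_true_is_false; intros [g [Hg Hn]]%existsb_exists.
    apply in_map_iff in Hg as [l [<- Hl]].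
    rewrite IHL in Hn by exact Hl; discriminate.
  - rewrite star_add, right_wins_Game; cbn [rights mover_wins existsb].
    apply orb_true_iff; right; apply existsb_exists.
    exists (add star r); split; [apply in_map; exact Hr | rewrite IHr; reflexivity].
Qed.

Lemma wins_first_right_star_add X :
  ends_protected X -> wins_first (add (Game [] [star]) X) = wins_first X.
Proof.
  induction 1 as [XL XR HXR _ _ IHL _ IHR].
  rewrite add_Game; cbn [map app]; rewrite !wins_first_Game; f_equal.
  - apply mover_wins_map_ext; intros x Hx; unfold right_wins; rewrite IHL; auto.
  - destruct XR as [|a t].
    + cbn [map mover_wins existsb].
      rewrite left_loses_star_add by (apply HXR; reflexivity); reflexivity.
    + rewrite mover_wins_cons by discriminate.
      rewrite (mover_wins_map_ext _ left_wins);
        [| intros x Hx; unfold left_wins; rewrite IHR; auto].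
      destruct (left_wins (add star (Game XL (a :: t)))) eqn:E; [reflexivity|].
      apply right_wins_of_left_loses_star_add in E.
      rewrite right_wins_Game in E; rewrite E; reflexivity.
Qed.

Theorem mainTheorem17 :
  let G := Game [] [star] in
  equiv_mod (Dclos (fun x => x = G)) G zero.
Proof.
  intros G X HX.
  assert (HXp : ends_protected X).
  { apply HX; [exact ends_protected_universe |].
    intros x ->; exact ends_protected_right_star. }
  unfold o; rewrite add_zero_l, wins_first_right_star_add by exact HXp.
  reflexivity.
Qed.
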